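(* Let $\mathcal{X}$ be a measurable space of inputs and let $P_{\mathrm{ben}}$ and $P_{\mathrm{bd}}$ be two probability distributions on $\mathcal{X}$. Let $x \mapsto S(x) \in \mathbb{R}^{n\times m}$ and $x \mapsto V(x) \in \mathbb{R}^{m\times d_v}$ be measurable maps. For $\lambda \in \mathbb{R}$ define $$R^{\lambda}(x) := \operatorname{softmax}(\lambda S(x))\,V(x) \in \mathbb{R}^{n\times d_v},$$ where the softmax is applied row-wise, so that $R^{1}(x)=\operatorname{softmax}(S(x))V(x)$. Define the scaling-induced response shift $$D(x;\lambda) := \operatorname{MSE}\big(R^{\lambda}(x), R^{1}(x)\big) = \frac{1}{N}\,\big\|R^{\lambda}(x)-R^{1}(x)\big\|_F^2, \qquad N := n\,d_v,$$ and for $c\in\{\mathrm{ben},\mathrm{bd}\}$ the class-wise mean curve $\bar D_c(\lambda) := \mathbb{E}_{x\sim P_c}[D(x;\lambda)]$. Assume there exist $\delta>0$ and measurable functions $M_1, M_2:\mathcal{X}\to[0,\infty)$ such that, for each $c\in\{\mathrm{ben},\mathrm{bd}\}$ and $P_c$-almost every $x$, and for all $\lambda\in(1-\delta,1+\delta)$, $$\Big\|\tfrac{\partial R^{\lambda}(x)}{\partial\lambda}\Big\|_F \le M_1(x), \qquad \Big\|\tfrac{\partial^2 R^{\lambda}(x)}{\partial\lambda^2}\Big\|_F \le M_2(x),$$ and $\mathbb{E}_{x\sim P_c}\big[M_1(x)^2+M_2(x)^2\big]<\infty$ for $c\in\{\mathrm{ben},\mathrm{bd}\}$. Then there exist finite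 constants $\Gamma_{\mathrm{ben}}$ and $\Gamma_{\mathrm{bd}}$ such that for each $c\in\{\mathrm{ben},\mathrm{bd}\}$, $$\bar D_c(\lambda) = \Gamma_c(\lambda-1)^2 + o\big((\lambda-1)^2\big) \qquad \text{as } \lambda\to 1.$$ Moreover, if $\Gamma_{\mathrm{ben}}\neq\Gamma_{\mathrm{bd}}$, then there exists $\epsilon>0$ such that $\bar D_{\mathrm{bd}}(\lambda)\neq \bar D_{\mathrm{ben}}(\lambda)$ for all $\lambda$ with $0<|\lambda-1|<\epsilon$.
   Context: This models a single cross-attention layer at a fixed denoising step of a text-to-image diffusion model: $S(x)$ is the attention score matrix for input prompt $x$, $V(x)$ the value matrix, and $\lambda$ a scaling factor applied to the attention scores. $P_{\mathrm{ben}}$ and $P_{\mathrm{bd}}$ are the benign and backdoor input distributions. The row-wise softmax of a row vector $s\in\mathbb{R}^m$ is $\operatorname{softmax}(s)_j = e^{s_j}/\sum_{k} e^{s_k}$. $\|\cdot\|_F$ is the Frobenius norm. *)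

From HB Require Import structures.
From mathcomp Require Import all_boot all_order all_algebra.
From mathcomp Require Import all_classical all_reals all_analysis.
Set Implicit Arguments. Unset Strict Implicit. Unset Printing Implicit Defensive.
Import Order.TTheory GRing.Theory Num.Theory.
Import numFieldNormedType.Exports.
Local Open Scope ring_scope.

Definition softmax (R : realType) (n m : nat) (A : 'M[R]_(n, m)) : 'M[R]_(n, m) :=
  \matrix_(i < n, j < m) (expR (A i j) / \sum_(k < m) expR (A i k)).

Definition Rlam (R : realType) (X : Type) (n m dv : nat)
  (S : X -> 'M[R]_(n, m)) (V : X -> 'M[R]_(m, dv)) (l : R) (x : X) : 'M[R]_(n, dv) :=
  softmax (l *: S x) *m V x.

Definition frob2 (R : realType) (p q : nat) (A : 'M[R]_(p, q)) : R :=
  \sum_(i < p) \sum_(j < q) A i j ^+ 2.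
Definition frob (R : realType) (p q : nat) (A : 'M[R]_(p, q)) : R :=
  Num.sqrt (frob2 A).

Definition Dshift (R : realType) (X : Type) (n m dv : nat)
  (S : X -> 'M[R]_(n, m)) (V : X -> 'M[R]_(m, dv)) (x : X) (l : R) : R :=
  (n * dv)%:R^-1 * frob2 (Rlam S V l x - Rlam S V 1 x).

Definition Dbar (R : realType) d (X : measurableType d) (P : probability X R)
  (n m dv : nat) (S : X -> 'M[R]_(n, m)) (V : X -> 'M[R]_(m, dv)) (l : R) : \bar R :=
  (\int[P]_x (Dshift S V x l)%:E)%E.

Definition dR1 (R : realType) (X : Type) (n m dv : nat)
  (S : X -> 'M[R]_(n, m)) (V : X -> 'M[R]_(m, dv)) (x : X) (l : R) : 'M[R]_(n, dv) :=
  \matrix_(i < n, j < dv) derive1 (fun t => Rlam S V t x i j) l.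
Definition dR2 (R : realType) (X : Type) (n m dv : nat)
  (S : X -> 'M[R]_(n, m)) (V : X -> 'M[R]_(m, dv)) (x : X) (l : R) : 'M[R]_(n, dv) :=
  \matrix_(i < n, j < dv) derive1 (fun t => derive1 (fun s => Rlam S V s x i j) t) l.

From HB Require Import structures.
From mathcomp Require Import all_boot all_order all_algebra.
From mathcomp Require Import all_classical all_reals all_analysis.
From mathcomp Require Import measurable_realfun.
From mathcomp Require Import ring lra.
Import Order.TTheory GRing.Theory Num.Theory.
Import numFieldNormedType.Exports.
Local Open Scope ring_scope.

(* Each entry of λ ↦ R^λ(x) is a softmax average
   λ ↦ Σ_k c_k e^(a_k λ) / Σ_k e^(a_k λ), which is smooth with derivative the
   softmax covariance <c a> - <c><a>.  Two applications of the mean value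
   theorem give, entrywise, a first-order Taylor expansion at λ = 1 with
   remainder at most M2(x) (λ - 1)^2 and linear term at most M1(x) |λ - 1|;
   squaring and averaging over the entries yields
     |D(x;λ) - γ(x) (λ - 1)^2| <= 2 (M1(x)^2 + M2(x)^2) |λ - 1|^3,
   where γ(x) = ‖∂R^λ(x)/∂λ at λ = 1‖_F^2 / N.  Integrating against P_c gives
   D̄_c(λ) = Γ_c (λ - 1)^2 + O(|λ - 1|^3) with Γ_c = E_c[γ], and two such
   expansions with different leading coefficients cannot coincide on a
   punctured neighbourhood of 1. *)

Set Implicit Arguments. Unset Strict Implicit. Unset Printing Implicit Defensive.

Section derivative_bounds.
Variable R : realType.
Implicit Types (f : R -> R) (a r K M u v l : R).

Lemma ler_dist_derive1 f a r K u v :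
  (forall x, derivable f x 1) ->
  (forall x, `|x - a| <= r -> `|derive1 f x| <= K) ->
  `|u - a| <= r -> `|v - a| <= r -> `|f v - f u| <= K * `|v - u|.
Proof.
move=> df fK.
wlog uv : u v / u <= v.
  move=> wlog_uv ua va; have [uv|/ltW vu] := leP u v; first exact: wlog_uv.
  by rewrite distrC [`|v - u|]distrC; apply: wlog_uv.
move=> ua va.
have [c] : exists2 c, c \in `[u, v] & f v - f u = derive1 f c * (v - u).
  apply: MVT_segment => //; first by move=> x _; rewrite derive1E; exact: derivableP.
  apply: continuous_subspaceT => x.
  by apply: differentiable_continuous; apply/derivable1_diffP.
rewrite in_itv /= => /andP[uc cv] ->.
rewrite normrM ler_wpM2r //; apply: fK.
move: ua va; rewrite !ler_norml => /andP[? ?] /andP[? ?]; apply/andP; split; lra.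
Qed.

Lemma taylor1_remainder_le f a r M l :
  (forall x, derivable f x 1) -> (forall x, derivable (derive1 f) x 1) ->
  (forall x, `|x - a| < r -> `|derive1 (derive1 f) x| <= M) ->
  `|l - a| < r ->
  `|f l - f a - derive1 f a * (l - a)| <= M * (l - a) ^+ 2.
Proof.
move=> df ddf f2M lar.
pose h x := f x - derive1 f a * x.
have dh (x : R) : is_derive x 1 h (derive1 f x - derive1 f a).
  apply: is_deriveB; last by apply: is_derive_eq; rewrite /GRing.scale /= mulr1.
  by rewrite derive1E; apply: derivableP.
have f2M' x : `|x - a| <= `|l - a| -> `|derive1 (derive1 f) x| <= M.
  by move=> xl; apply: f2M; apply: le_lt_trans lar.
have M0 : 0 <= M by apply: le_trans (f2M' a _); rewrite ?subrr ?normr0.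
have dhM x : `|x - a| <= `|l - a| -> `|derive1 h x| <= M * `|l - a|.
  move=> xl; rewrite derive1E; case: (dh x) => _ ->.
  apply: le_trans (ler_dist_derive1 ddf f2M' _ xl) _; first by rewrite subrr normr0.
  exact: ler_wpM2l.
have -> : f l - f a - derive1 f a * (l - a) = h l - h a by rewrite /h; ring.
rewrite -(real_normK (num_real (l - a))) expr2 mulrA.
by apply: (ler_dist_derive1 _ dhM); rewrite ?subrr ?normr0.
Qed.

End derivative_bounds.

Section gibbs_average.
Variable R : realType.
Implicit Types (l : R).

Definition expsum m (c a : 'I_m -> R) l := \sum_(k < m) c k * expR (a k * l).

Definition gibbs_avg m (c a : 'I_m -> R) l := expsum c a l / expsum (fun=> 1) a l.

Lemma is_derive_expsum m (c a : 'I_m -> R) l :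
  is_derive l 1 (expsum c a) (expsum (fun k => c k * a k) a l).
Proof.
have -> : expsum c a = \sum_(k < m) (fun t => c k * expR (a k * t)).
  by rewrite fct_sumE.
apply: is_derive_sum => k.
have dlin : is_derive l 1 (fun t : R => a k * t) (a k).
  by apply: is_derive_eq; rewrite /GRing.scale /= mulr1.
apply: is_derive_eq (is_deriveZ (c k) (is_derive1_comp (is_derive_expR _) dlin)) _.
by rewrite /GRing.scale /= mulrA mulrAC.
Qed.

Lemma expsum1_gt0 m (a : 'I_m.+1 -> R) l : 0 < expsum (fun=> 1) a l.
Proof.
rewrite /expsum big_ord_recl mul1r ltr_wpDr ?expR_gt0 //.
by apply: sumr_ge0 => k _; rewrite mul1r expR_ge0.
Qed.

Lemma is_derive_gibbs_avg m (c a : 'I_m -> R) l :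
  is_derive l 1 (gibbs_avg c a)
    (gibbs_avg (fun k => c k * a k) a l - gibbs_avg c a l * gibbs_avg a a l).
Proof.
(* For m = 0 both sums vanish, so gibbs_avg is identically 0 (x / 0 = 0). *)
case: m c a => [|m] c a.
  have -> : gibbs_avg c a = cst 0.
    by apply/funext => t; rewrite /gibbs_avg /expsum !big_ord0 mul0r.
  rewrite /gibbs_avg /expsum !big_ord0 !mul0r subr0.
  exact: is_derive_cst.
have Z0 : expsum (fun=> 1) a l != 0 by rewrite gt_eqF ?expsum1_gt0.
apply: is_derive_eq
  (is_deriveM (is_derive_expsum c a l) (is_deriveV Z0 (is_derive_expsum (fun=> 1) a l))) _.
have -> : expsum (fun k => 1 * a k) a l = expsum a a l.
  by apply: eq_bigr => k _; rewrite mul1r.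
by rewrite /gibbs_avg /GRing.scale /=; field.
Qed.

Lemma derivable_gibbs_avg m (c a : 'I_m -> R) l : derivable (gibbs_avg c a) l 1.
Proof. by have [] := is_derive_gibbs_avg c a l. Qed.

Lemma derive1_gibbs_avg m (c a : 'I_m -> R) :
  derive1 (gibbs_avg c a) =
  (fun l => gibbs_avg (fun k => c k * a k) a l - gibbs_avg c a l * gibbs_avg a a l).
Proof. by apply/funext => l; rewrite derive1E; case: (is_derive_gibbs_avg c a l). Qed.

Lemma derivable_derive1_gibbs_avg m (c a : 'I_m -> R) l :
  derivable (derive1 (gibbs_avg c a)) l 1.
Proof.
by rewrite derive1_gibbs_avg; apply: derivableB; [|apply: derivableM];
  apply: derivable_gibbs_avg.
Qed.

End gibbs_average.

Section measurable_gibbs_avg.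
Variables (d : measure_display) (X : measurableType d) (R : realType).

Lemma measurable_funV_gt0 (g : X -> R) :
  (forall x, 0 < g x) -> measurable_fun setT g ->
  measurable_fun setT (fun x => (g x)^-1).
Proof.
move=> g_gt0 mg.
have -> : (fun x => (g x)^-1) = expR \o (fun x => - ln (g x)).
  by apply/funext => x /=; rewrite expRN lnK ?posrE.
apply: measurableT_comp (@measurable_expR R) _.
exact: measurableT_comp (measurableT_comp (@measurable_ln R) mg).
Qed.

Lemma measurable_expsum m (c a : X -> 'I_m -> R) l :
  (forall k, measurable_fun setT (fun x => c x k)) ->
  (forall k, measurable_fun setT (fun x => a x k)) ->
  measurable_fun setT (fun x => expsum (c x) (a x) l).
Proof.
move=> mc ma; apply: measurable_sum => k; apply: measurable_funM => //.
apply: measurableT_comp (@measurable_expR R) _.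
exact: measurable_funM (ma k) (measurable_cst l).
Qed.

Lemma measurable_gibbs_avg m (c a : X -> 'I_m -> R) l :
  (forall k, measurable_fun setT (fun x => c x k)) ->
  (forall k, measurable_fun setT (fun x => a x k)) ->
  measurable_fun setT (fun x => gibbs_avg (c x) (a x) l).
Proof.
case: m c a => [|m] c a mc ma.
  have -> : (fun x => gibbs_avg (c x) (a x) l) = cst 0.
    by apply/funext => x; rewrite /gibbs_avg /expsum !big_ord0 mul0r.
  exact: measurable_cst.
apply: measurable_funM; first exact: measurable_expsum.
apply: measurable_funV_gt0; first by move=> x; apply: expsum1_gt0.
by apply: measurable_expsum => // k; apply: measurable_cst.
Qed.

End measurable_gibbs_avg.

Section frobenius.
Variable R : realType.

Lemma frob2_ge0 p q (A : 'M[R]_(p, q)) : 0 <= frob2 A.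
Proof. by apply: sumr_ge0 => i _; apply: sumr_ge0 => j _; apply: sqr_ge0. Qed.

Lemma normr_le_frob p q (A : 'M[R]_(p, q)) i j : `|A i j| <= frob A.
Proof.
rewrite /frob -sqrtr_sqr ler_wsqrtr // /frob2 (bigD1 i) //= (bigD1 j) //=.
rewrite -addrA lerDl addr_ge0 //; first by apply: sumr_ge0 => k _; apply: sqr_ge0.
by apply: sumr_ge0 => k _; apply: sumr_ge0 => k' _; apply: sqr_ge0.
Qed.

Lemma frob2_le_sqr p q (A : 'M[R]_(p, q)) M : frob A <= M -> frob2 A <= M ^+ 2.
Proof.
move=> AM; rewrite -(sqr_sqrtr (frob2_ge0 A)) -/(frob A).
by rewrite lerXn2r ?nnegrE ?(le_trans _ AM) ?sqrtr_ge0.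
Qed.

Lemma frob2Z p q s (A : 'M[R]_(p, q)) : frob2 (s *: A) = s ^+ 2 * frob2 A.
Proof.
rewrite /frob2 mulr_sumr; apply: eq_bigr => i _; rewrite mulr_sumr.
by apply: eq_bigr => j _; rewrite mxE exprMn.
Qed.

Lemma frob2B_le p q (A B : 'M[R]_(p, q)) e :
  (forall i j, `|A i j ^+ 2 - B i j ^+ 2| <= e) -> `|frob2 A - frob2 B| <= e *+ (p * q).
Proof.
move=> ABe; rewrite /frob2 -sumrB mulnC mulrnA.
apply: le_trans (ler_norm_sum _ _ _) _.
rewrite -[p in _ *+ p]card_ord -sumr_const; apply: ler_sum => i _.
rewrite -sumrB; apply: le_trans (ler_norm_sum _ _ _) _.
by rewrite -[q in _ *+ q]card_ord -sumr_const; apply: ler_sum.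
Qed.

End frobenius.

Lemma natrV_mulrn_le (R : numFieldType) k (c : R) : 0 <= c -> k%:R^-1 * (c *+ k) <= c.
Proof.
case: k => [|k] c0; first by rewrite invr0 mul0r.
by rewrite -[c *+ _]mulr_natl mulKf ?pnatr_eq0.
Qed.

Lemma normr_sqrB_le (R : realFieldType) (a b t M1 M2 : R) : 0 <= t <= 1 ->
  `|a - b| <= M2 * t ^+ 2 -> `|b| <= M1 * t ->
  `|a ^+ 2 - b ^+ 2| <= 2 * (M1 ^+ 2 + M2 ^+ 2) * t ^+ 3.
Proof.
move=> /andP[t0 t1] abM bM.
have -> : a ^+ 2 - b ^+ 2 = (a - b) * ((a - b) + 2 * b) by ring.
rewrite normrM; apply: le_trans (_ : _ <= M2 * t ^+ 2 * (M2 * t ^+ 2 + 2 * (M1 * t))) _.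
  apply: ler_pM => //; apply: le_trans (ler_normD _ _) _.
  by rewrite normrM ger0_norm // lerD // ler_wpM2l.
have -> : M2 * t ^+ 2 * (M2 * t ^+ 2 + 2 * (M1 * t)) =
          t ^+ 3 * (M2 ^+ 2 * t + 2 * (M1 * M2)) by ring.
rewrite [leRHS]mulrC; apply: ler_wpM2l; first exact: exprn_ge0.
have := sqr_ge0 (M1 - M2); have : M2 ^+ 2 * t <= M2 ^+ 2 by rewrite ler_piMr ?sqr_ge0.
nra.
Qed.

Section response_shift.
Variables (R : realType) (X : Type) (n m dv : nat).
Variables (S : X -> 'M[R]_(n, m)) (V : X -> 'M[R]_(m, dv)).

Lemma Rlam_entryE x i j :
  (fun l => Rlam S V l x i j) = gibbs_avg (fun k => V x k j) (fun k => S x i k).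
Proof.
apply/funext => l; rewrite /Rlam /softmax /gibbs_avg /expsum !mxE mulr_suml.
apply: eq_bigr => k _; rewrite !mxE mulrC mulrA [l * _]mulrC; congr (_ / _).
by apply: eq_bigr => k' _; rewrite mxE mul1r mulrC.
Qed.

(* The coefficient γ(x) of (λ - 1)^2 in D(x; λ); Γ_c is its P_c-mean. *)
Definition Dcoef x := (n * dv)%:R^-1 * frob2 (dR1 S V x 1).

Lemma Dcoef_ge0 x : 0 <= Dcoef x.
Proof. by rewrite mulr_ge0 ?invr_ge0 ?frob2_ge0. Qed.

Lemma Dcoef_le_sqr x M : frob (dR1 S V x 1) <= M -> Dcoef x <= M ^+ 2.
Proof.
move=> /frob2_le_sqr; apply: le_trans; rewrite ler_piMl ?frob2_ge0 //.
by case: (n * dv)%N => [|k]; rewrite ?invr0 // invf_le1 ?ler1n.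
Qed.

Lemma Dshift_ge0 x l : 0 <= Dshift S V x l.
Proof. by rewrite mulr_ge0 ?invr_ge0 ?frob2_ge0. Qed.

Lemma Dshift_sqr_approx x delta M1x M2x l :
  (forall t, 1 - delta < t < 1 + delta ->
     frob (dR1 S V x t) <= M1x /\ frob (dR2 S V x t) <= M2x) ->
  `|l - 1| < delta -> `|l - 1| <= 1 ->
  `|Dshift S V x l - Dcoef x * (l - 1) ^+ 2|
    <= 2 * (M1x ^+ 2 + M2x ^+ 2) * `|l - 1| ^+ 3.
Proof.
move=> dRM ldelta l1.
have entry_approx i j :
    `|(Rlam S V l x - Rlam S V 1 x) i j ^+ 2 - ((l - 1) *: dR1 S V x 1) i j ^+ 2|
    <= 2 * (M1x ^+ 2 + M2x ^+ 2) * `|l - 1| ^+ 3.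
  have -> : (Rlam S V l x - Rlam S V 1 x) i j = Rlam S V l x i j - Rlam S V 1 x i j.
    by rewrite !mxE.
  rewrite [X in _ - X ^+ 2]mxE [dR1 S V x 1 i j]mxE; apply: normr_sqrB_le; first by rewrite normr_ge0.
    rewrite real_normK ?num_real // mulrC.
    apply: taylor1_remainder_le ldelta.
    - by move=> t; rewrite Rlam_entryE; apply: derivable_gibbs_avg.
    - by move=> t; rewrite Rlam_entryE; apply: derivable_derive1_gibbs_avg.
    move=> t; rewrite distrC ltr_distlC => /dRM[_ dR2M].
    by apply: le_trans dR2M; have := normr_le_frob (dR2 S V x t) i j; rewrite mxE.
  rewrite normrM mulrC ler_wpM2r //.
  have /dRM[dR1M _] : 1 - delta < 1 < 1 + delta.
    by rewrite -ltr_distlC subrr normr0 (le_lt_trans (normr_ge0 _) ldelta).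
  by apply: le_trans dR1M; have := normr_le_frob (dR1 S V x 1) i j; rewrite mxE.
rewrite /Dshift /Dcoef -mulrA [frob2 _ * _]mulrC -frob2Z -mulrBr normrM ger0_norm ?invr_ge0 //.
apply: le_trans (ler_wpM2l _ (frob2B_le entry_approx)) _; first by rewrite invr_ge0.
by apply: natrV_mulrn_le; rewrite !mulr_ge0 ?addr_ge0 ?sqr_ge0 ?exprn_ge0.
Qed.

End response_shift.

Lemma measurable_frob2 (R : realType) d (X : measurableType d) p q (A : X -> 'M[R]_(p, q)) :
  (forall i j, measurable_fun setT (fun x => A x i j)) ->
  measurable_fun setT (fun x => frob2 (A x)).
Proof.
move=> mA; apply: measurable_sum => i; apply: measurable_sum => j.
exact: measurable_funX.
Qed.

Section response_measurability.
Variables (R : realType) (d : measure_display) (X : measurableType d) (n m dv : nat).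
Variables (S : X -> 'M[R]_(n, m)) (V : X -> 'M[R]_(m, dv)).
Hypothesis mS : forall i j, measurable_fun setT (fun x => S x i j).
Hypothesis mV : forall i j, measurable_fun setT (fun x => V x i j).

Lemma measurable_Rlam l i j : measurable_fun setT (fun x => Rlam S V l x i j).
Proof.
have -> : (fun x => Rlam S V l x i j) =
          (fun x => gibbs_avg (fun k => V x k j) (fun k => S x i k) l).
  by apply/funext => x; rewrite -(Rlam_entryE S V x i j).
exact: measurable_gibbs_avg.
Qed.

Lemma measurable_dR1 i j : measurable_fun setT (fun x => dR1 S V x 1 i j).
Proof.
have -> : (fun x => dR1 S V x 1 i j) = (fun x =>
    gibbs_avg (fun k => V x k j * S x i k) (fun k => S x i k) 1
    - gibbs_avg (fun k => V x k j) (fun k => S x i k) 1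
      * gibbs_avg (fun k => S x i k) (fun k => S x i k) 1).
  by apply/funext => x; rewrite mxE Rlam_entryE derive1_gibbs_avg.
apply: measurable_funB; last apply: measurable_funM;
  apply: measurable_gibbs_avg => // k; exact: measurable_funM.
Qed.

Lemma measurable_Dshift l : measurable_fun setT (fun x => Dshift S V x l).
Proof.
apply: measurable_funM => //; apply: measurable_frob2 => i j.
have -> : (fun x => (Rlam S V l x - Rlam S V 1 x) i j) =
          (fun x => Rlam S V l x i j - Rlam S V 1 x i j).
  by apply/funext => x; rewrite !mxE.
by apply: measurable_funB; apply: measurable_Rlam.
Qed.

Lemma measurable_Dcoef : measurable_fun setT (Dcoef S V).
Proof. by apply: measurable_funM => //; apply: measurable_frob2 => i j; apply: measurable_dR1. Qed.

End response_measurability.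

Section integral_bounds.
Local Open Scope ereal_scope.
Variables (d : measure_display) (T : measurableType d) (R : realType).
Variable mu : {measure set T -> \bar R}.

Lemma ge0_integralZr_EFin (f : T -> R) (k : R) :
  measurable_fun setT f -> (forall x, (0 <= f x)%R) -> (0 <= k)%R ->
  \int[mu]_x (f x * k)%:E = \int[mu]_x (f x)%:E * k%:E.
Proof.
move=> mf f0 k0; under eq_integral do rewrite EFinM.
by apply: ge0_integralZr => //; [apply/measurable_EFinP | move=> x _; rewrite lee_fin].
Qed.

Lemma abse_integralB_le (f g h : T -> R) :
  measurable_fun setT f -> measurable_fun setT g -> measurable_fun setT h ->
  (forall x, (0 <= f x)%R) -> (forall x, (0 <= g x)%R) -> (forall x, (0 <= h x)%R) ->
  \int[mu]_x (g x)%:E \is a fin_num -> \int[mu]_x (h x)%:E \is a fin_num ->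
  {ae mu, forall x, (`|f x - g x| <= h x)%R} ->
  `|\int[mu]_x (f x)%:E - \int[mu]_x (g x)%:E| <= \int[mu]_x (h x)%:E.
Proof.
move=> mf mg mh f0 g0 h0 gfin hfin fgh.
have intD (k1 k2 : T -> R) : measurable_fun setT k1 -> measurable_fun setT k2 ->
    (forall x, (0 <= k1 x)%R) -> (forall x, (0 <= k2 x)%R) ->
    \int[mu]_x (k1 x + k2 x)%:E = \int[mu]_x (k1 x)%:E + \int[mu]_x (k2 x)%:E.
  move=> mk1 mk2 k10 k20; under eq_integral do rewrite EFinD.
  by apply: ge0_integralD => //; by [move=> x _; rewrite lee_fin | apply/measurable_EFinP].
have le_int (k1 k2 : T -> R) : measurable_fun setT k1 -> measurable_fun setT k2 ->
    (forall x, (0 <= k1 x)%R) -> (forall x, (0 <= k2 x)%R) ->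
    {ae mu, forall x, (k1 x <= k2 x)%R} ->
    \int[mu]_x (k1 x)%:E <= \int[mu]_x (k2 x)%:E.
  move=> mk1 mk2 k10 k20 k12; apply: ae_ge0_le_integral => //;
    try by [move=> x _; rewrite lee_fin | apply/measurable_EFinP].
  by apply: filterS k12 => x k12x _; rewrite lee_fin.
have f_le : \int[mu]_x (f x)%:E <= \int[mu]_x (g x)%:E + \int[mu]_x (h x)%:E.
  rewrite -intD //; apply: le_int => //; first exact: measurable_funD.
    by move=> x; rewrite addr_ge0.
  by apply: filterS fgh => x; rewrite ler_distl => /andP[].
have g_le : \int[mu]_x (g x)%:E <= \int[mu]_x (f x)%:E + \int[mu]_x (h x)%:E.
  rewrite -intD //; apply: le_int => //; first exact: measurable_funD.
    by move=> x; rewrite addr_ge0.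
  by apply: filterS fgh => x; rewrite ler_distl lerBlDr addrC => /andP[].
have ffin : \int[mu]_x (f x)%:E \is a fin_num.
  rewrite ge0_fin_numE ?integral_ge0 //; last by move=> x _; rewrite lee_fin.
  by apply: le_lt_trans f_le _; rewrite ltey_eq fin_numD gfin hfin.
move: f_le g_le; rewrite -(fineK ffin) -(fineK gfin) -(fineK hfin) -!EFinD !lee_fin.
by move=> fle gle; rewrite ler_distl lerBlDr gle fle.
Qed.

End integral_bounds.

Section quadratic_asymptotics.
Variable R : realType.

Definition quadratic_at (a : R) (F : R -> \bar R) (G : R) :=
  forall e : R, 0 < e -> \forall l \near a,
    (`|F l - (G * (l - a) ^+ 2)%:E| <= (e * (l - a) ^+ 2)%:E)%E.

Lemma quadratic_at_of_cubic_bound a F G (C r : R) : 0 < r ->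
  (forall l, `|l - a| < r ->
     (`|F l - (G * (l - a) ^+ 2)%:E| <= (C * `|l - a| ^+ 3)%:E)%E) ->
  quadratic_at a F G.
Proof.
move=> r0 FC e e0; apply/nbhs_ballP.
have C1 : 0 < `|C| + 1 by rewrite ltr_wpDl.
exists (Num.min r (e / (`|C| + 1))); first by rewrite /= lt_min r0 divr_gt0.
move=> l; rewrite /ball /= distrC lt_min => /andP[lr le].
apply: le_trans (FC l lr) _; rewrite lee_fin -(real_normK (num_real (l - a))).
rewrite exprSr mulrCA [leRHS]mulrC; apply: ler_wpM2l; first exact: sqr_ge0.
rewrite ltr_pdivlMr // in le; apply: le_trans (ltW le).
rewrite [leRHS]mulrC; apply: ler_wpM2r; first exact: normr_ge0.
by rewrite (le_trans (ler_norm C)) // lerDl.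
Qed.

Lemma quadratic_at_neq a F1 F2 G1 G2 :
  quadratic_at a F1 G1 -> quadratic_at a F2 G2 -> G1 != G2 ->
  exists2 eps : R, 0 < eps & forall l, 0 < `|l - a| < eps -> F2 l != F1 l.
Proof.
move=> F1G1 F2G2 G12; set e := `|G1 - G2| / 3.
have e0 : 0 < e by rewrite divr_gt0 // normr_gt0 subr_eq0.
have /nbhs_ballP[r1 r10 near1] := F1G1 e e0.
have /nbhs_ballP[r2 r20 near2] := F2G2 e e0.
exists (Num.min r1 r2); first by rewrite lt_min r10 r20.
move=> l /andP[la]; rewrite lt_min => /andP[lr1 lr2]; apply/eqP => F21.
have := near1 l; have := near2 l; rewrite /ball /= distrC lr1 lr2 F21.
move=> /(_ isT) + /(_ isT); case: (F1 l) => [z||] //=; rewrite ?leye_eq // !lee_fin.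
move=> zG2 zG1; set s := (l - a) ^+ 2 in zG1 zG2 *.
have s0 : 0 < s by rewrite /s -(real_normK (num_real (l - a))) exprn_gt0.
have : `|G1 - G2| * s <= `|z - G2 * s| + `|z - G1 * s|.
  rewrite -[s in _ * s](gtr0_norm s0) -normrM mulrBl.
  have -> : G1 * s - G2 * s = (z - G2 * s) - (z - G1 * s) by ring.
  exact: ler_normB.
have : `|G1 - G2| * s = 3 * (e * s) by rewrite /e; field.
have : 0 < e * s by rewrite mulr_gt0.
lra.
Qed.

End quadratic_asymptotics.

Section class_mean_curve.
Variables (R : realType) (d : measure_display) (X : measurableType d).
Variables (P : probability X R) (n m dv : nat).
Variables (S : X -> 'M[R]_(n, m)) (V : X -> 'M[R]_(m, dv)).
Hypothesis mS : forall i j, measurable_fun setT (fun x => S x i j).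
Hypothesis mV : forall i j, measurable_fun setT (fun x => V x i j).
Variables (delta : R) (M1 M2 : X -> R).
Hypothesis delta_gt0 : 0 < delta.
Hypotheses (mM1 : measurable_fun setT M1) (mM2 : measurable_fun setT M2).
Hypothesis dR_bounded : {ae P, forall x, forall l, 1 - delta < l < 1 + delta ->
  frob (dR1 S V x l) <= M1 x /\ frob (dR2 S V x l) <= M2 x}.
Hypothesis M_sqr_integrable : (\int[P]_x ((M1 x ^+ 2 + M2 x ^+ 2)%:E) < +oo)%E.

Let one_in_window : 1 - delta < 1 < 1 + delta.
Proof. by rewrite -ltr_distlC subrr normr0. Qed.

Let K x := 2 * (M1 x ^+ 2 + M2 x ^+ 2).

Let K_ge0 x : 0 <= K x.
Proof. by rewrite mulr_ge0 ?addr_ge0 ?sqr_ge0. Qed.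

Let measurable_K : measurable_fun setT K.
Proof.
by apply: measurable_funM => //; apply: measurable_funD; apply: measurable_funX.
Qed.

Let integral_K_fin : (\int[P]_x (K x)%:E)%E \is a fin_num.
Proof.
have -> : (\int[P]_x (K x)%:E = \int[P]_x ((M1 x ^+ 2 + M2 x ^+ 2) * 2)%:E)%E.
  by apply: eq_integral => x _; rewrite mulrC.
rewrite ge0_integralZr_EFin //; last by move=> x; rewrite addr_ge0 ?sqr_ge0.
  rewrite fin_numM // ge0_fin_numE ?M_sqr_integrable //.
  by apply: integral_ge0 => x _; rewrite lee_fin addr_ge0 ?sqr_ge0.
by apply: measurable_funD; apply: measurable_funX.
Qed.

Let integral_Dcoef_fin : (\int[P]_x (Dcoef S V x)%:E)%E \is a fin_num.
Proof.
rewrite ge0_fin_numE; last by apply: integral_ge0 => x _; rewrite lee_fin Dcoef_ge0.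
apply: le_lt_trans (_ : _ <= \int[P]_x (K x)%:E)%E _; last first.
  by rewrite ltey_eq integral_K_fin.
apply: ae_ge0_le_integral => //; try by [move=> x _; rewrite lee_fin ?Dcoef_ge0
  | apply/measurable_EFinP; apply: measurable_Dcoef | apply/measurable_EFinP].
apply: filterS dR_bounded => x dRx _; rewrite lee_fin.
have [dR1M _] := dRx 1 one_in_window.
have := sqr_ge0 (M1 x); have := sqr_ge0 (M2 x); have := Dcoef_le_sqr dR1M.
rewrite /K; lra.
Qed.

Lemma Dbar_cubic_bound l : `|l - 1| < Num.min delta 1 ->
  (`|Dbar P S V l - (fine (\int[P]_x (Dcoef S V x)%:E) * (l - 1) ^+ 2)%:E|
     <= (fine (\int[P]_x (K x)%:E) * `|l - 1| ^+ 3)%:E)%E.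
Proof.
rewrite lt_min => /andP[ldelta /ltW l1].
rewrite !EFinM (fineK integral_Dcoef_fin) (fineK integral_K_fin).
set s := (l - 1) ^+ 2; set t := `|l - 1| ^+ 3.
have s0 : 0 <= s := sqr_ge0 _.
have t0 : 0 <= t := exprn_ge0 _ (normr_ge0 _).
have mDcoef := measurable_Dcoef mS mV.
have [Dcoef_s_ge0 K_t_ge0] : (forall x, 0 <= Dcoef S V x * s) /\ (forall x, 0 <= K x * t).
  by split=> x; rewrite mulr_ge0 ?Dcoef_ge0.
have integralDs : (\int[P]_x (Dcoef S V x * s)%:E = \int[P]_x (Dcoef S V x)%:E * s%:E)%E.
  by apply: ge0_integralZr_EFin => // x; apply: Dcoef_ge0.
have integralKt : (\int[P]_x (K x * t)%:E = \int[P]_x (K x)%:E * t%:E)%E.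
  exact: ge0_integralZr_EFin.
rewrite -integralDs -integralKt; apply: abse_integralB_le => //.
- exact: measurable_Dshift.
- exact: measurable_funM mDcoef (measurable_cst _).
- exact: measurable_funM measurable_K (measurable_cst _).
- by move=> x; apply: Dshift_ge0.
- by rewrite integralDs fin_numM.
- by rewrite integralKt fin_numM.
apply: filterS dR_bounded => x dRx.
exact: Dshift_sqr_approx dRx ldelta l1.
Qed.

Lemma Dbar_quadratic : quadratic_at 1 (Dbar P S V) (fine (\int[P]_x (Dcoef S V x)%:E)).
Proof.
apply: (quadratic_at_of_cubic_bound (r := Num.min delta 1)) Dbar_cubic_bound.
by rewrite lt_min delta_gt0 ltr01.
Qed.

End class_mean_curve.

Unset Implicit Arguments. Set Strict Implicit. Set Printing Implicit Defensive.

Theorem theorem3p1 (R : realType) (d : measure_display) (X : measurableType d)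
  (Pben Pbd : probability X R) (n m dv : nat)
  (S : X -> 'M[R]_(n, m)) (V : X -> 'M[R]_(m, dv))
  (HS : forall i j, measurable_fun setT (fun x => S x i j))
  (HV : forall i j, measurable_fun setT (fun x => V x i j))
  (delta : R) (Hdelta : 0 < delta) (M1 M2 : X -> R)
  (HM1m : measurable_fun setT M1) (HM2m : measurable_fun setT M2)
  (HM1p : forall x, 0 <= M1 x) (HM2p : forall x, 0 <= M2 x)
  (Hben : {ae Pben, forall x, forall l, 1 - delta < l < 1 + delta ->
            frob (dR1 S V x l) <= M1 x /\ frob (dR2 S V x l) <= M2 x})
  (Hbd : {ae Pbd, forall x, forall l, 1 - delta < l < 1 + delta ->
            frob (dR1 S V x l) <= M1 x /\ frob (dR2 S V x l) <= M2 x})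
  (Iben : (\int[Pben]_x ((M1 x ^+ 2 + M2 x ^+ 2)%:E) < +oo)%E)
  (Ibd : (\int[Pbd]_x ((M1 x ^+ 2 + M2 x ^+ 2)%:E) < +oo)%E) :
  exists Gben Gbd : R,
    (forall e : R, 0 < e -> \forall l \near (1 : R),
       (`| Dbar Pben S V l - (Gben * (l - 1) ^+ 2)%:E | <= (e * (l - 1) ^+ 2)%:E)%E) /\
    (forall e : R, 0 < e -> \forall l \near (1 : R),
       (`| Dbar Pbd S V l - (Gbd * (l - 1) ^+ 2)%:E | <= (e * (l - 1) ^+ 2)%:E)%E) /\
    (Gben != Gbd -> exists2 eps : R, 0 < eps &
       forall l : R, 0 < `| l - 1 | < eps -> Dbar Pbd S V l != Dbar Pben S V l).
Proof.
have ben_quadratic := Dbar_quadratic HS HV Hdelta HM1m HM2m Hben Iben.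
have bd_quadratic := Dbar_quadratic HS HV Hdelta HM1m HM2m Hbd Ibd.
eexists _, _; split; first exact: ben_quadratic.
split; first exact: bd_quadratic.
exact: quadratic_at_neq ben_quadratic bd_quadratic.
Qed.
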